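(* Let $k\ge2$, $r\ge0$ and $n=2\cdot 3^k-2+4r$. Let $M$ be the closed surface carrying the polyhedral map $D_{\{2k+1,2k+1\}}(n)$. Then $M$ is orientable if $r$ is even and non-orientable if $r$ is odd.
   Context: Vertex set $\mathbb{Z}_n$; integers are read modulo $n$. Define $w_0=0$, $w_1=3^k-1+2r$. Then successively subtract $3^{k-1}+r$ twice, then $3^{k-2}$ twice, $3^{k-3}$ twice, ..., and finally $3$ twice. This gives vertices $w_2,\dots,w_{2k-1}$, and one checks $w_{2k-1}=2$. Let $P$ be the $(2k+1)$-gon with cyclically ordered boundary vertices $(0,w_1,w_2,\dots,w_{2k-2},2,1)$. The map $D_{\{2k+1,2k+1\}}(n)$ is the 2-dimensional cell complex whose 2-cells are the $n$ translates $P+i$, $i\in\mathbb{Z}_n$. It is a known standing fact (Datta) that this is a $\{2k+1,2k+1\}$-equivelar polyhedral map on a closed surface $M$: every 2-cell is a $(2k+1)$-gon, every vertex has degree $2k+1$, and any two 2-cells meet in the empty set, a common vertex, or a common edge. *)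

From mathcomp Require Import all_boot.
Set Implicit Arguments. Unset Strict Implicit. Unset Printing Implicit Defensive.

Definition Dn (k r : nat) : nat := 2 * 3 ^ k - 2 + 4 * r.

(* Amount subtracted to go from w_j to w_{j+1}, for j >= 1:
   steps j = 1,2 subtract 3^(k-1)+r ; steps j = 3,4 subtract 3^(k-2); ...;
   steps j = 2k-3, 2k-2 subtract 3. *)
Definition wstep (k r j : nat) : nat :=
  let s := (j - 1) %/ 2 in 3 ^ (k - 1 - s) + (if s == 0 then r else 0).

(* w_j as integers (all values are nonnegative, so nat subtraction is exact). *)
Fixpoint w (k r j : nat) : nat :=
  match j with
  | 0 => 0
  | 1 => 3 ^ k - 1 + 2 * r
  | j'.+1 => w k r j' - wstep k r j'
  end.

(* boundary cycle of P: (0, w_1, ..., w_{2k-2}, 2, 1) *)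
Definition polyP (k r : nat) : seq nat :=
  [seq w k r j | j <- iota 0 (2 * k - 1)] ++ [:: 2; 1].

(* the translate P + i, with vertices read in Z_n (represented by 0..n-1) *)
Definition faceD (k r i : nat) : seq nat :=
  [seq (x + i) %% Dn k r | x <- polyP k r].

Definition facesD (k r : nat) : seq (seq nat) :=
  [seq faceD k r i | i <- iota 0 (Dn k r)].

Definition dedges (s : seq nat) : seq (nat * nat) :=
  [seq (nth 0 s p, nth 0 s ((p + 1) %% size s)) | p <- iota 0 (size s)].

Definition orient (b : bool) (s : seq nat) : seq nat := if b then s else rev s.

(* A polygonal cell complex (list of faces, each a cyclic vertex list) is
   orientable iff the faces can be coherently oriented: no directed edge
   occurs in two distinct oriented faces (equivalently, every shared edge is
   traversed in opposite directions by the two faces containing it). *)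
Definition orientable_complex (F : seq (seq nat)) : Prop :=
  exists eps : nat -> bool,
    forall i j, i < size F -> j < size F ->
    forall e, e \in dedges (orient (eps i) (nth [::] F i)) ->
              e \in dedges (orient (eps j) (nth [::] F j)) -> i = j.

From mathcomp Require Import all_boot zify.

(* Put h = w_1, so that n = 2h.  Along the boundary of P each vertex is the
   previous one minus a step d_p modulo n, with d_0 = h (as +h = -h) and the
   other steps 3^(k-1)+r, 3^(k-2), ..., 1, each taken twice, all in (0, h).
   If P + i and P + j share a directed edge at positions p and q then
   d_p = d_q; if they share an edge with opposite directions then
   d_p + d_q = 0 mod n, which forces p = q = 0 and i = j + h mod n.
   For r even, h is even and every d_p with p > 0 is odd, so w_p has the
   parity of p + 1 for p > 0; hence orienting P + i by the parity of i is
   coherent.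
   For r odd, P + i and P + (i+1) both traverse (i+2, i+1), so a coherent
   orientation alternates with i; but P and P + m, m = 3^(k-1) + r even,
   both traverse (w_1, w_2). *)

Set Implicit Arguments.
Unset Strict Implicit.
Unset Printing Implicit Defensive.

Lemma dedgesP s e :
  reflect (exists2 p, p < size s & e = (nth 0 s p, nth 0 s ((p + 1) %% size s)))
          (e \in dedges s).
Proof.
apply: (iffP mapP) => [[p] | [p lt_p ->]]; last by exists p; rewrite // mem_iota.
by rewrite mem_iota => /andP[_ lt_p] ->; exists p.
Qed.

Lemma dedges_rev_swap s x y : (x, y) \in dedges (rev s) -> (y, x) \in dedges s.
Proof.
case/dedgesP => q; rewrite size_rev => ltqN [-> ->].
apply/dedgesP; exists (size s - (q + 1) %% size s).-1; first lia.
have s_gt0 : 0 < size s by lia.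
rewrite !nth_rev ?ltn_pmod //.
case: (ltnP q.+1 (size s)) => lt_q1.
  rewrite addn1 (modn_small lt_q1) (modn_small (_ : _ < size s)); last lia.
  by congr (nth _ _ _, nth _ _ _); lia.
have -> : q = (size s).-1 by lia.
rewrite addn1 prednK // modnn subn0 addn1 prednK // modnn subnn.
by congr (nth _ _ _, _); lia.
Qed.

Lemma mem_dedges_rev s x y : ((x, y) \in dedges (rev s)) = ((y, x) \in dedges s).
Proof.
apply/idP/idP; first exact: dedges_rev_swap.
by rewrite -{1}(revK s); apply: dedges_rev_swap.
Qed.

Lemma mem_dedges_orient b s x y :
  ((x, y) \in dedges (orient b s)) = ((if b then (x, y) else (y, x)) \in dedges s).
Proof. by case: b; rewrite //= mem_dedges_rev. Qed.

Lemma coherent_shared_edge (F : seq (seq nat)) (eps : nat -> bool) i j e :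
  (forall i j, i < size F -> j < size F ->
     forall e, e \in dedges (orient (eps i) (nth [::] F i)) ->
               e \in dedges (orient (eps j) (nth [::] F j)) -> i = j) ->
  i < size F -> j < size F -> eps i = eps j ->
  e \in dedges (nth [::] F i) -> e \in dedges (nth [::] F j) -> i = j.
Proof.
case: e => x y coherent lt_i lt_j Eij e_i e_j.
apply: (coherent i j lt_i lt_j (if eps i then (x, y) else (y, x)));
  by rewrite -?Eij; case: (eps i); rewrite /= ?mem_dedges_rev.
Qed.

Section CyclicSteps.
Variables (v d : nat -> nat) (n : nat).

Lemma step_shift p i :
  v p.+1 + d p = v p %[mod n] -> d p + (v p.+1 + i) = v p + i %[mod n].
Proof. by move=> Ep; rewrite addnCA addnA -modnDml Ep modnDml. Qed.

Lemma shared_edge_step p q i j :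
  v p.+1 + d p = v p %[mod n] -> v q.+1 + d q = v q %[mod n] ->
  v p + i = v q + j %[mod n] -> v p.+1 + i = v q.+1 + j %[mod n] ->
  d p = d q %[mod n].
Proof.
move=> Sp Sq Ep Ep1; apply/eqP; rewrite -(eqn_modDr (v p.+1 + i)) step_shift //.
by rewrite -(modnDmr (d q)) Ep1 modnDmr step_shift // Ep.
Qed.

Lemma reversed_edge_step p q i j :
  v p.+1 + d p = v p %[mod n] -> v q.+1 + d q = v q %[mod n] ->
  v p + i = v q.+1 + j %[mod n] -> v p.+1 + i = v q + j %[mod n] ->
  d p + d q = 0 %[mod n].
Proof.
move=> Sp Sq Ep Ep1; apply/eqP; rewrite -(eqn_modDr (v p.+1 + i)) add0n.
rewrite (addnC (d p)) -addnA -modnDmr step_shift // modnDmr -modnDmr Ep modnDmr.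
by rewrite step_shift // Ep1.
Qed.

End CyclicSteps.

Lemma expn_sub_pred m a b : b < a -> m ^ (a - b) = m * m ^ (a - 1 - b).
Proof. by move=> lt_ba; rewrite -expnS; congr (_ ^ _); lia. Qed.

Lemma pred_half_cases p : 0 < p -> p = (p.-1)./2.*2.+1 \/ p = (p.-1)./2.*2.+2.
Proof.
move=> p_gt0; have := odd_double_half p.-1.
by case: (odd p.-1); move: (p.-1)./2 => t /=; rewrite -muln2; lia.
Qed.

Lemma pred_half_odd_inj p q :
  0 < p -> 0 < q -> (p.-1)./2 = (q.-1)./2 -> odd p = odd q -> p = q.
Proof.
move=> p_gt0 q_gt0 Eh; rewrite -(prednK p_gt0) -(prednK q_gt0) /= => /negb_inj Eo.
by rewrite -(odd_double_half p.-1) -(odd_double_half q.-1) Eh Eo.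
Qed.

Lemma odd_eq_mod d a b : ~~ odd d -> a = b %[mod d] -> odd a = odd b.
Proof. by move=> /negbTE d_even E; rewrite -(odd_mod a d_even) E odd_mod. Qed.

Lemma addn_eq0_mod_double a b m : 0 < a <= m -> 0 < b <= m ->
  a + b = 0 %[mod 2 * m] -> a = m /\ b = m.
Proof.
move=> /andP[a_gt0 le_am] /andP[b_gt0 le_bm].
case: (ltnP (a + b) (2 * m)) => [lt_abm | ge_abm]; last lia.
by rewrite modn_small // mod0n; lia.
Qed.

Section Polygon.
Variables k r : nat.
Hypothesis k_gt1 : 1 < k.

Notation h := (3 ^ k - 1 + 2 * r).
Notation n := (Dn k r).

Lemma Dn_double : n = 2 * h.
Proof. have : 0 < 3 ^ k by rewrite expn_gt0. by rewrite /Dn; lia. Qed.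

Lemma wstepE p :
  wstep k r p = 3 ^ (k - 1 - (p.-1)./2) + (if (p.-1)./2 == 0 then r else 0).
Proof. by rewrite /wstep divn2 (subn1 p). Qed.

Lemma wstep_odd t : wstep k r t.*2.+1 = 3 ^ (k - 1 - t) + (if t == 0 then r else 0).
Proof. by rewrite wstepE /= doubleK. Qed.

Lemma wstep_even t : wstep k r t.*2.+2 = wstep k r t.*2.+1.
Proof. by rewrite !wstepE /= uphalf_double doubleK. Qed.

Lemma wS p : 0 < p -> w k r p.+1 = w k r p - wstep k r p.
Proof. by case: p. Qed.

Lemma w_odd t : t <= k ->
  w k r t.*2.+1 = 3 ^ (k - t) - 1 + (if t == 0 then 2 * r else 0).
Proof.
elim: t => [|t IH] le_tk; first by rewrite subn0.
have : 0 < 3 ^ (k - 1 - t) by rewrite expn_gt0.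
rewrite doubleS (@wS t.*2.+2) // (@wS t.*2.+1) // wstep_even wstep_odd (IH (ltnW le_tk)).
rewrite (expn_sub_pred 3 le_tk) (_ : k - t.+1 = k - 1 - t); last lia.
by case: (t == 0) => /=; lia.
Qed.

Lemma w_even t : t < k ->
  w k r t.*2.+2 = 2 * 3 ^ (k - 1 - t) - 1 + (if t == 0 then r else 0).
Proof.
move=> lt_tk; have : 0 < 3 ^ (k - 1 - t) by rewrite expn_gt0.
rewrite wS // wstep_odd (w_odd (ltnW lt_tk)) (expn_sub_pred 3 lt_tk).
by case: (t == 0); lia.
Qed.

Lemma wstep_le_w p : 0 < p -> p <= 2 * k -> wstep k r p <= w k r p.
Proof.
move=> p_gt0; have := pred_half_cases p_gt0; move: (p.-1)./2 => t.
case=> -> le_p2k; (have lt_tk : t < k by move: le_p2k; rewrite -muln2; lia);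
  have : 0 < 3 ^ (k - 1 - t) by rewrite expn_gt0.
- rewrite wstep_odd (w_odd (ltnW lt_tk)) (expn_sub_pred 3 lt_tk).
  by case: (t == 0); lia.
- rewrite wstep_even wstep_odd w_even //.
  by case: (t == 0); lia.
Qed.

Lemma w_stepS p : 0 < p -> p <= 2 * k -> w k r p.+1 + wstep k r p = w k r p.
Proof. by move=> p_gt0 le_p; rewrite wS // subnK // wstep_le_w. Qed.

Lemma w_tail : [/\ w k r (2 * k - 1) = 2, w k r (2 * k) = 1 & w k r (2 * k).+1 = 0].
Proof.
have lt_k1k : k - 1 < k by lia.
have E1 : 2 * k - 1 = (k - 1).*2.+1 by rewrite -muln2; lia.
have E2 : 2 * k = (k - 1).*2.+2 by rewrite -muln2; lia.
have E3 : (2 * k).+1 = k.*2.+1 by rewrite -muln2 mulnC.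
rewrite E3 w_odd // E1 E2 w_odd ?(ltnW lt_k1k) // w_even // !subnn.
rewrite (_ : k - (k - 1) = 1); last lia.
by rewrite !gtn_eqF ?subn_gt0 // ltnW.
Qed.

Lemma wstep_lt p : wstep k r p < h.
Proof.
have : 3 ^ (k - 1 - (p.-1)./2) <= 3 ^ (k - 1) by rewrite leq_pexp2l ?leq_subr.
have : 0 < 3 ^ (k - 1) by rewrite expn_gt0.
have -> : 3 ^ k = 3 * 3 ^ (k - 1) by rewrite -expnS subn1 prednK // ltnW.
by rewrite wstepE; case: (_ == 0); lia.
Qed.

Lemma wstep_inj p q : 0 < p -> 0 < q -> p <= 2 * k -> q <= 2 * k ->
  wstep k r p = wstep k r q -> (p.-1)./2 = (q.-1)./2.
Proof.
move=> p_gt0 q_gt0 le_p le_q.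
have lt_t : (p.-1)./2 < k.
  by have := pred_half_cases p_gt0; move: (p.-1)./2 => t; rewrite -!muln2; lia.
have lt_t' : (q.-1)./2 < k.
  by have := pred_half_cases q_gt0; move: (q.-1)./2 => t; rewrite -!muln2; lia.
rewrite !wstepE; move: (p.-1)./2 (q.-1)./2 lt_t lt_t' => t t' lt_t lt_t'.
have lt_exp u : u != 0 -> u < k -> 3 ^ (k - 1 - u) < 3 ^ (k - 1).
  by rewrite -lt0n => u_gt0 lt_uk; rewrite ltn_exp2l //; lia.
case: (eqVneq t 0) => [-> | t_neq0]; case: (eqVneq t' 0) => [-> | t'_neq0] //=.
- by have := lt_exp t' t'_neq0 lt_t'; rewrite subn0; lia.
- by have := lt_exp t t_neq0 lt_t; rewrite subn0; lia.
- by rewrite !addn0 => /(expnI (isT : 1 < 3)); lia.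
Qed.

Lemma odd_h : ~~ odd h.
Proof. by rewrite oddD oddB ?expn_gt0 // oddX orbT oddM. Qed.

Lemma odd_Dn : ~~ odd n.
Proof. by rewrite Dn_double oddM. Qed.

Section EvenR.
Hypothesis r_even : ~~ odd r.

Lemma odd_wstep p : odd (wstep k r p).
Proof. by rewrite wstepE oddD oddX orbT; case: (_ == 0); rewrite //= (negbTE r_even). Qed.

Lemma odd_w p : 0 < p -> p <= (2 * k).+1 -> odd (w k r p) = ~~ odd p.
Proof.
elim: p => [// | p IH] _ le_p; case: (posnP p) => [-> | p_gt0].
  by rewrite /= (negbTE odd_h).
by rewrite wS // oddB ?wstep_le_w // odd_wstep (IH p_gt0 (ltnW le_p)) addbT.
Qed.

End EvenR.

(* The steps d_p; d_0 = h because the first boundary step +h is a step by -h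
   modulo n = 2h. *)
Definition wdelta p := if p == 0 then h else wstep k r p.

Lemma wdelta_step p : p <= 2 * k -> w k r p.+1 + wdelta p = w k r p %[mod n].
Proof.
rewrite /wdelta; case: (posnP p) => [-> _ | p_gt0 le_p] /=.
  by rewrite addnn -mul2n -Dn_double modnn mod0n.
by rewrite w_stepS.
Qed.

Lemma wdelta_bounds p : 0 < wdelta p <= h.
Proof.
have : 0 < wstep k r p by rewrite wstepE addn_gt0 expn_gt0.
have := wstep_lt p; have : 1 < 3 ^ k by rewrite -{1}(expn0 3) ltn_exp2l // ltnW.
by rewrite /wdelta; case: (p == 0); lia.
Qed.

Lemma wdelta_eq_h p : (wdelta p == h) = (p == 0).
Proof.
rewrite /wdelta; case: (eqVneq p 0) => [_ | _]; first by rewrite eqxx.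
by rewrite ltn_eqF ?wstep_lt.
Qed.

Lemma polyP_w : polyP k r = [seq w k r p | p <- iota 0 (2 * k).+1].
Proof.
have [w_2k1 w_2k _] := w_tail.
have E : (2 * k).+1 = 2 * k - 1 + 2 by lia.
have I : iota (2 * k - 1) 2 = [:: 2 * k - 1; 2 * k].
  by rewrite /= subn1 prednK //; lia.
by rewrite /polyP E iotaD map_cat add0n I !map_cons w_2k1 w_2k.
Qed.

Lemma dedges_faceD i :
  dedges (faceD k r i) =
  [seq ((w k r p + i) %% n, (w k r p.+1 + i) %% n) | p <- iota 0 (2 * k).+1].
Proof.
rewrite /dedges /faceD polyP_w -map_comp size_map size_iota.
apply/eq_in_map => p; rewrite mem_iota add0n => /andP[_ lt_p].
rewrite !(nth_map 0) ?size_iota ?ltn_pmod // nth_iota //.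
rewrite nth_iota ?ltn_pmod // !add0n addn1.
case: (ltnP p.+1 (2 * k).+1) => [lt_p1 | ge_p1]; first by rewrite modn_small.
have [_ _ w_end] := w_tail.
by rewrite (_ : p = 2 * k) ?modnn ?w_end //; lia.
Qed.

Lemma faceD_edge i p : p <= 2 * k ->
  ((w k r p + i) %% n, (w k r p.+1 + i) %% n) \in dedges (faceD k r i).
Proof. by move=> le_p; rewrite dedges_faceD; apply: map_f; rewrite mem_iota. Qed.

Lemma size_facesD : size (facesD k r) = n.
Proof. by rewrite size_map size_iota. Qed.

Lemma nth_facesD i : i < n -> nth [::] (facesD k r) i = faceD k r i.
Proof. by move=> lt_i; rewrite (nth_map 0) ?size_iota // nth_iota. Qed.

Lemma wdelta_mod_inj p q : wdelta p = wdelta q %[mod n] -> wdelta p = wdelta q.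
Proof.
have lt_n u : wdelta u < n.
  by have /andP[u_gt0 u_le] := wdelta_bounds u; rewrite Dn_double; lia.
by rewrite !modn_small.
Qed.

Lemma shared_edge_faces_eq i j p q : ~~ odd r ->
  i < n -> j < n -> odd i = odd j -> p <= 2 * k -> q <= 2 * k ->
  w k r p + i = w k r q + j %[mod n] -> w k r p.+1 + i = w k r q.+1 + j %[mod n] ->
  i = j.
Proof.
move=> r_even lt_i lt_j Eij le_p le_q Ep Ep1.
have /wdelta_mod_inj Ed := shared_edge_step (wdelta_step le_p) (wdelta_step le_q) Ep Ep1.
have Epq : p = q.
  case: (posnP p) => [p0 | p_gt0].
    by move/eqP: Ed; rewrite p0 eq_sym wdelta_eq_h => /eqP.
  case: (posnP q) => [q0 | q_gt0]; first by move/eqP: Ed; rewrite q0 wdelta_eq_h => /eqP.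
  move: Ed; rewrite /wdelta !gtn_eqF // => /(wstep_inj p_gt0 q_gt0 le_p le_q) Eh.
  apply: pred_half_odd_inj => //.
  have := odd_eq_mod odd_Dn Ep; rewrite !oddD Eij => /addIb.
  rewrite (odd_w r_even p_gt0 (leqW le_p)) (odd_w r_even q_gt0 (leqW le_q)).
  exact: negb_inj.
move: Ep; rewrite Epq => /eqP; rewrite eqn_modDl !modn_small //; exact/eqP.
Qed.

Lemma reversed_edge_faces_parity i j p q : p <= 2 * k -> q <= 2 * k ->
  w k r p + i = w k r q.+1 + j %[mod n] -> w k r p.+1 + i = w k r q + j %[mod n] ->
  odd i = odd j.
Proof.
move=> le_p le_q Ep Ep1.
have := reversed_edge_step (wdelta_step le_p) (wdelta_step le_q) Ep Ep1.
rewrite Dn_double => /(addn_eq0_mod_double (wdelta_bounds p) (wdelta_bounds q)).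
case=> /eqP + /eqP; rewrite !wdelta_eq_h => /eqP p0 /eqP q0.
move: Ep; rewrite p0 q0 add0n => /(odd_eq_mod odd_Dn).
by rewrite oddD (negbTE odd_h).
Qed.

Lemma facesD_orientable : ~~ odd r -> orientable_complex (facesD k r).
Proof.
move=> r_even; exists odd => i j; rewrite size_facesD => lt_i lt_j [x y].
rewrite !nth_facesD // !mem_dedges_orient.
case Ei: (odd i); case Ej: (odd j);
  rewrite /= !dedges_faceD => /mapP[p mem_p Ep] /mapP[q mem_q Eq];
  move: mem_p mem_q Eq; case: Ep => -> ->;
  rewrite !mem_iota !ltnS => /andP[_ le_p] /andP[_ le_q] [E1 E2].
- exact: shared_edge_faces_eq r_even lt_i lt_j (etrans Ei (esym Ej)) le_p le_q E1 E2.
- by have := reversed_edge_faces_parity le_p le_q E2 E1; rewrite Ei Ej.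
- by have := reversed_edge_faces_parity le_p le_q E2 E1; rewrite Ei Ej.
- exact: shared_edge_faces_eq r_even lt_i lt_j (etrans Ei (esym Ej)) le_p le_q E1 E2.
Qed.

Lemma faceD_shared_edge_succ i :
  (i.+2 %% n, i.+1 %% n) \in dedges (faceD k r i) /\
  (i.+2 %% n, i.+1 %% n) \in dedges (faceD k r i.+1).
Proof.
have [w_2k1 w_2k w_end] := w_tail.
have E : (2 * k - 1).+1 = 2 * k by lia.
split; first by move: (faceD_edge i (leq_subr 1 (2 * k))); rewrite E w_2k1 w_2k.
by move: (faceD_edge i.+1 (leqnn (2 * k))); rewrite w_2k w_end.
Qed.

Lemma faceD_shared_edge_w1 :
  (w k r 1 %% n, w k r 2 %% n) \in dedges (faceD k r 0) /\
  (w k r 1 %% n, w k r 2 %% n) \in dedges (faceD k r (wstep k r 1)).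
Proof.
have le_2k : 2 <= 2 * k by lia.
have le_1k : 1 <= 2 * k := ltnW le_2k.
split; first by move: (faceD_edge 0 le_1k); rewrite !addn0.
have step2 : wstep k r 2 = wstep k r 1 := wstep_even 0.
by move: (faceD_edge (wstep k r 1) le_2k); rewrite (w_stepS _ le_1k) // -{1}step2 w_stepS.
Qed.

Lemma facesD_nonorientable : odd r -> ~ orientable_complex (facesD k r).
Proof.
move=> r_odd [eps coherent].
have same_orient_eq i j e : i < n -> j < n -> eps i = eps j ->
    e \in dedges (faceD k r i) -> e \in dedges (faceD k r j) -> i = j.
  move=> lt_i lt_j Eij; rewrite -!nth_facesD //.
  by apply: coherent_shared_edge coherent _ _ Eij; rewrite size_facesD.
have alternate i : i.+1 < n -> eps i.+1 = ~~ eps i.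
  move=> lt_i1; have [e_i e_i1] := faceD_shared_edge_succ i.
  case: (eqVneq (eps i.+1) (eps i)) => [E | ]; last by case: (eps i.+1); case: (eps i).
  by have := same_orient_eq _ _ _ lt_i1 (ltnW lt_i1) E e_i1 e_i; lia.
have eps_parity i : i < n -> eps i = eps 0 (+) odd i.
  elim: i => [|i IH] lt_i; first by rewrite addbF.
  by rewrite alternate // IH ?(ltnW lt_i) //= addbN.
have m_gt0 : 0 < wstep k r 1 by rewrite wstepE addn_gt0 expn_gt0.
have lt_mn : wstep k r 1 < n by have := wstep_lt 1; rewrite Dn_double; lia.
have Em : eps 0 = eps (wstep k r 1).
  by rewrite (eps_parity _ lt_mn) wstepE oddD oddX orbT /= r_odd addbF.
have [e_0 e_m] := faceD_shared_edge_w1.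
by have := same_orient_eq _ _ _ (ltn_trans m_gt0 lt_mn) lt_mn Em e_0 e_m; lia.
Qed.

End Polygon.

Theorem mainTheorem16 (k r : nat) (hk : 2 <= k) :
  (~~ odd r -> orientable_complex (facesD k r)) /\
  (odd r -> ~ orientable_complex (facesD k r)).
Proof. by split; [exact: facesD_orientable | exact: facesD_nonorientable]. Qed.
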